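(* Let $1\le k\le n$, let $Q$ be a symmetric $n\times n$ matrix with entries in $[0,1]$ and zero diagonal, and let $A=\mathrm{Bern}(Q)$. Let $\varepsilon=\max_{\pi:[n]\to[k]}\|A_\pi-Q_\pi\|_1$. Then \[ \mathbb E[\varepsilon]\le9\sqrt{\rho(Q)\Big(\frac{1+\log k}{n}+\frac{k^2}{n^2}\Big)}, \] and if $n\rho(Q)\ge1$, then with probability at least $1-e^{-n}$, \[ \varepsilon\le8\sqrt{\rho(Q)\Big(\frac{1+\log k}{n}+\frac{k^2}{n^2}\Big)}. \]
   Context: $\mathrm{Bern}(Q)$ is the random symmetric $\{0,1\}$-matrix with $A_{ij}=A_{ji}=1$ with probability $Q_{ij}$ independently for $i<j$ and $A_{ii}=0$. For an $n\times n$ matrix $H$: $\|H\|_1=\frac1{n^2}\sum_{i,j}|H_{ij}|$ and $\rho(H)=\frac1{n^2}\sum_{i,j}H_{ij}$. For $\pi:[n]\to[k]$ with classes $V_i=\pi^{-1}(i)$, $H_\pi$ is the $n\times n$ matrix whose entry at $(u,v)\in V_i\times V_j$ is the average $\frac1{|V_i||V_j|}\sum_{(a,b)\in V_i\times V_j}H_{ab}$. *)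

From HB Require Import structures.
From mathcomp Require Import all_boot all_order all_algebra.
From mathcomp Require Import reals.
From mathcomp.analysis Require Import sequences exp.
Set Implicit Arguments. Unset Strict Implicit. Unset Printing Implicit Defensive.
Import Order.TTheory GRing.Theory Num.Theory.
Local Open Scope ring_scope.

Section Defs.
Variable R : realType.

(* Sample space: one bit per ordered pair; only pairs (i,j) with i<j are
   random (independent Bernoulli(Q i j)); other bits are forced to false
   (weight 0 otherwise), so the total mass is 1. *)
Definition bern_weight (n : nat) (Q : 'M[R]_n) (w : {ffun 'I_n * 'I_n -> bool}) : R :=
  \prod_(p : 'I_n * 'I_n)
     (if (p.1 < p.2)%N then (if w p then Q p.1 p.2 else 1 - Q p.1 p.2)
      else (if w p then 0 else 1)).

Definition bern_mx (n : nat) (w : {ffun 'I_n * 'I_n -> bool}) : 'M[R]_n :=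
  \matrix_(i, j) (if (i < j)%N then (w (i, j))%:R
                  else if (j < i)%N then (w (j, i))%:R else 0).

Definition bern_E (n : nat) (Q : 'M[R]_n) (f : 'M[R]_n -> R) : R :=
  \sum_(w : {ffun 'I_n * 'I_n -> bool}) bern_weight Q w * f (bern_mx w).

Definition bern_P (n : nat) (Q : 'M[R]_n) (P : 'M[R]_n -> bool) : R :=
  \sum_(w : {ffun 'I_n * 'I_n -> bool} | P (bern_mx w)) bern_weight Q w.

Definition norm1 (n : nat) (H : 'M[R]_n) : R :=
  (n%:R ^+ 2)^-1 * \sum_(i < n) \sum_(j < n) `|H i j|.

Definition rho (n : nat) (H : 'M[R]_n) : R :=
  (n%:R ^+ 2)^-1 * \sum_(i < n) \sum_(j < n) H i j.

Definition blockavg (n k : nat) (H : 'M[R]_n) (pi : {ffun 'I_n -> 'I_k}) : 'M[R]_n :=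
  \matrix_(u, v)
    ((\sum_(a : 'I_n | pi a == pi u) \sum_(b : 'I_n | pi b == pi v) H a b)
     / (#|[set a : 'I_n | pi a == pi u]| * #|[set b : 'I_n | pi b == pi v]|)%:R).

(* eps(A) = max over pi : [n] -> [k] of ||A_pi - Q_pi||_1 (all terms are >= 0,
   so 0 is a neutral start for the max). *)
Definition cut_eps (n k : nat) (Q A : 'M[R]_n) : R :=
  \big[Num.max/0]_(pi : {ffun 'I_n -> 'I_k}) norm1 (blockavg A pi - blockavg Q pi).

End Defs.

From HB Require Import structures.
From mathcomp Require Import all_boot all_order all_algebra.
From mathcomp Require Import reals.
From mathcomp.analysis Require Import sequences exp.
From mathcomp Require Import ring lra.
Import Order.TTheory GRing.Theory Num.Theory.
Local Open Scope ring_scope.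
Set Implicit Arguments. Unset Strict Implicit. Unset Printing Implicit Defensive.

(* For a matrix H, n^2 ||H_pi||_1 = sum_ab s_ab H_ab where s_ab = +-1 is the sign of the
   block sum of H containing (a, b), so s is constant on the blocks of pi.  Hence
   eps > x forces one of at most k^n 2^(k^2) centred linear statistics
   L_c = sum_ab c_ab (A_ab - Q_ab), |c_ab| <= 1, to exceed n^2 x.  Each L_c is a sum of
   independent centred Bernoulli terms over the pairs a < b, so
   E exp(lam L_c) <= exp(4 lam^2 sum Q) for 0 <= lam <= 1/4, and a Chernoff bound with a
   union bound over the sign patterns gives the tail when 4 sqrt(bound) < 3 rho.  In the
   opposite regime the single statistic L_1 suffices, since n^2 eps <= L_1 + 2 sum Q.
   The expectation then follows from the tail because eps <= 1, or, when n rho < 1,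
   from E eps <= 2 rho, as the statistics are centred. *)

Section BernoulliMgf.
Variable R : realType.

Lemma expR_le_quadratic (x : R) : x <= 1/2 -> expR x <= 1 + x + 2 * x ^+ 2.
Proof.
move=> hx.
have hNx : 1 - x <= expR (- x) by have := expR_ge1Dx (- x).
have -> : expR x = (expR (- x))^-1 by rewrite expRN invrK.
apply: (@le_trans _ _ (1 - x)^-1); first by rewrite lef_pV2 ?posrE ?expR_gt0 //; lra.
rewrite -[(1 - x)^-1]mulr1 ler_pdivrMl; last by lra.
have : 0 <= x ^+ 2 * (1 - 2 * x) by apply: mulr_ge0; [exact: sqr_ge0 | lra].
nra.
Qed.

Lemma bernoulli_mgf_le (q mu : R) : 0 <= q <= 1 -> mu <= 1/2 ->
  q * expR (mu * (1 - q)) + (1 - q) * expR (- (mu * q)) <= expR (2 * mu ^+ 2 * q).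
Proof.
move=> /andP[q0 q1] hmu.
have -> : q * expR (mu * (1 - q)) + (1 - q) * expR (- (mu * q))
    = expR (- (mu * q)) * (1 + q * (expR mu - 1)).
  have -> : mu * (1 - q) = - (mu * q) + mu by ring.
  by rewrite expRD; ring.
have hq : 1 + q * (expR mu - 1) <= expR (q * (mu + 2 * mu ^+ 2)).
  apply: le_trans (expR_ge1Dx _); rewrite lerD2l ler_wpM2l //.
  by have := expR_le_quadratic hmu; lra.
apply: le_trans (ler_wpM2l (expR_ge0 _) hq) _.
by rewrite -expRD ler_expR; nra.
Qed.

End BernoulliMgf.

Definition cut_rate (R : realType) (n k : nat) : R :=
  (1 + ln (k%:R : R)) / n%:R + k%:R ^+ 2 / n%:R ^+ 2.

Section CutRate.
Variables (R : realType) (n k : nat).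
Hypothesis hk : (1 <= k)%N.

Lemma ln_k_ge0 : 0 <= ln (k%:R : R).
Proof. by rewrite ln_ge0 // ler1n. Qed.

Lemma cut_rate_ge_inv : (n%:R)^-1 <= cut_rate R n k.
Proof.
rewrite /cut_rate -[X in X <= _]addr0 lerD //; last first.
  by rewrite divr_ge0 // exprn_ge0.
by rewrite -[X in X <= _]mul1r ler_wpM2r ?invr_ge0 // lerDl ln_k_ge0.
Qed.

Lemma cut_rate_ge0 : 0 <= cut_rate R n k.
Proof. by apply: le_trans cut_rate_ge_inv; rewrite invr_ge0. Qed.

Lemma cut_rate_scaled : (0 < n)%N ->
  n%:R ^+ 2 * cut_rate R n k = n%:R * (1 + ln k%:R) + k%:R ^+ 2.
Proof. by move=> hn; rewrite /cut_rate; field; rewrite pnatr_eq0 -lt0n. Qed.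

Lemma count_le_expR : ((k ^ n * 2 ^ (k * k))%:R : R) <= expR (n%:R * ln k%:R + k%:R ^+ 2).
Proof.
rewrite expRD natrM ler_pM ?ler0n //.
  by rewrite natrX expRM_natl lnK // posrE ltr0n.
rewrite natrX expr2 -natrM -[X in expR X]mulr1 expRM_natl.
rewrite lerXn2r ?nnegrE ?ler0n ?expR_ge0 //.
by apply: le_trans (expR_ge1Dx 1); rewrite lexx.
Qed.

End CutRate.

Definition mxdot (R : pzRingType) (n : nat) (c H : 'M[R]_n) : R :=
  \sum_a \sum_b c a b * H a b.

Lemma sum_offdiag (V : zmodType) (n : nat) (F : 'I_n -> 'I_n -> V) :
  (forall a, F a a = 0) ->
  \sum_a \sum_b F a b = \sum_(p : 'I_n * 'I_n | (p.1 < p.2)%N) (F p.1 p.2 + F p.2 p.1).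
Proof.
move=> F0; rewrite pair_bigA /= (bigID (fun p : 'I_n * 'I_n => (p.1 < p.2)%N)) /=.
rewrite big_split /=; congr (_ + _).
rewrite (bigID (fun p : 'I_n * 'I_n => (p.2 < p.1)%N)) /= [X in _ + X]big1; last first.
  move=> [a b] /= /andP[]; rewrite -!leqNgt => hab hba.
  by have -> : a = b by apply/val_inj/anti_leq; rewrite hab hba.
have swap_inj : injective (fun p : 'I_n * 'I_n => (p.2, p.1)) by move=> [? ?] [? ?] [-> ->].
rewrite addr0 (reindex_inj swap_inj) /=; apply: eq_bigl => p.
by rewrite andbC andb_idr // => /ltnW; rewrite leqNgt.
Qed.

Section BlockAverage.
Variables (R : realType) (n k : nat) (pi : {ffun 'I_n -> 'I_k}).

Definition class_size (i : 'I_k) : R := #|[set x : 'I_n | pi x == i]|%:R.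

Lemma class_size_gt0 a : 0 < class_size (pi a).
Proof. by rewrite ltr0n; apply/card_gt0P; exists a; rewrite inE. Qed.

Lemma blockavgE (H : 'M[R]_n) u v :
  blockavg H pi u v = (\sum_(a | pi a == pi u) \sum_(b | pi b == pi v) H a b) /
                      (class_size (pi u) * class_size (pi v)).
Proof. by rewrite mxE natrM. Qed.

Lemma sum_class_avg (g : 'I_k -> R) (F : 'I_n -> R) :
  \sum_u g (pi u) * ((\sum_(a | pi a == pi u) F a) / class_size (pi u)) =
  \sum_a g (pi a) * F a.
Proof.
transitivity (\sum_u \sum_(a | pi a == pi u) g (pi a) * F a / class_size (pi a)).
  apply: eq_bigr => u _; rewrite mulr_suml mulr_sumr.
  by apply: eq_bigr => a /eqP ->; rewrite mulrA.
rewrite (exchange_big_dep xpredT) //=; apply: eq_bigr => a _.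
have -> : \sum_(u | pi a == pi u) g (pi a) * F a / class_size (pi a) =
    g (pi a) * F a / class_size (pi a) * class_size (pi a).
  rewrite sumr_const -mulr_natr /class_size; congr (_ * _%:R).
  by apply: eq_card => u; rewrite inE eq_sym.
by rewrite divfK // gt_eqF // class_size_gt0.
Qed.

Lemma blockavg_sum (h : 'I_k -> 'I_k -> R) (H : 'M[R]_n) :
  \sum_u \sum_v h (pi u) (pi v) * blockavg H pi u v = \sum_a \sum_b h (pi a) (pi b) * H a b.
Proof.
transitivity (\sum_u \sum_b h (pi u) (pi b) *
                ((\sum_(a | pi a == pi u) H a b) / class_size (pi u))).
  apply: eq_bigr => u _; rewrite -[in RHS]sum_class_avg; apply: eq_bigr => v _.
  by rewrite blockavgE exchange_big invfM mulrA -!mulr_suml !mulrA.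
rewrite exchange_big [RHS]exchange_big; apply: eq_bigr => b _.
exact (sum_class_avg (fun i => h i (pi b)) (fun a => H a b)).
Qed.

Lemma norm1_ge0 (H : 'M[R]_n) : 0 <= norm1 H.
Proof.
rewrite /norm1 mulr_ge0 ?invr_ge0 ?exprn_ge0 //.
by apply: sumr_ge0 => a _; apply: sumr_ge0.
Qed.

Lemma norm1_blockavg_le (H : 'M[R]_n) : norm1 (blockavg H pi) <= norm1 H.
Proof.
rewrite /norm1 ler_wpM2l ?invr_ge0 ?exprn_ge0 //.
have := blockavg_sum (fun _ _ => 1) (\matrix_(a, b) `|H a b|).
under eq_bigr do under eq_bigr do rewrite mul1r.
under [in X in _ = X -> _]eq_bigr do under eq_bigr do rewrite mul1r mxE.
move=> <-; apply: ler_sum => u _; apply: ler_sum => v _.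
have hd : 0 <= (class_size (pi u) * class_size (pi v))^-1.
  by rewrite invr_ge0 mulr_ge0 ?ltW ?class_size_gt0.
rewrite !blockavgE normrM [`|_^-1|]ger0_norm // ler_wpM2r //.
apply: le_trans (ler_norm_sum _ _ _) (ler_sum _ _) => a _.
by apply: le_trans (ler_norm_sum _ _ _) (ler_sum _ _) => b _; rewrite mxE.
Qed.

Definition block_sign_mx (sg : {ffun 'I_k * 'I_k -> bool}) : 'M[R]_n :=
  \matrix_(a, b) (if sg (pi a, pi b) then 1 else -1).

Lemma block_sign_mx_bound sg a b : `|block_sign_mx sg a b| <= 1.
Proof. by rewrite mxE; case: ifP; rewrite ?normrN normr1. Qed.

Lemma norm1_blockavg_sign (H : 'M[R]_n) :
  exists sg, norm1 (blockavg H pi) = (n%:R ^+ 2)^-1 * mxdot (block_sign_mx sg) H.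
Proof.
exists [ffun ij => 0 <= \sum_(a | pi a == ij.1) \sum_(b | pi b == ij.2) H a b].
rewrite /norm1 /mxdot; congr (_ * _).
under [RHS]eq_bigr do under eq_bigr do rewrite mxE.
rewrite -(blockavg_sum (fun i j => if _ (i, j) then 1 else -1)).
apply: eq_bigr => u _; apply: eq_bigr => v _.
have hd : 0 < class_size (pi u) * class_size (pi v) by rewrite mulr_gt0 ?class_size_gt0.
rewrite ffunE blockavgE /=; case: ifPn => [hS|].
  by rewrite mul1r ger0_norm // divr_ge0 // ltW.
by rewrite -ltNge => hS; rewrite mulN1r ltr0_norm // pmulr_llt0 ?invr_gt0.
Qed.

End BlockAverage.

Arguments block_sign_mx {R n k}.

Section CutNorm.
Variables (R : realType) (n k : nat) (Q : 'M[R]_n).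

Lemma blockavgB (A B : 'M[R]_n) (pi : {ffun 'I_n -> 'I_k}) :
  blockavg A pi - blockavg B pi = blockavg (A - B) pi.
Proof.
apply/matrixP => u v; rewrite !mxE -mulrBl -sumrB; congr (_ * _).
by apply: eq_bigr => a _; rewrite -sumrB; apply: eq_bigr => b _; rewrite !mxE.
Qed.

Lemma cut_eps_le_norm1 (A : 'M[R]_n) : cut_eps k Q A <= norm1 (A - Q).
Proof.
apply: bigmax_le => [|pi _]; first exact: norm1_ge0.
by rewrite blockavgB norm1_blockavg_le.
Qed.

Lemma cut_eps_gt (A : 'M[R]_n) (x : R) : 0 <= x -> x < cut_eps k Q A ->
  exists (pi : {ffun 'I_n -> 'I_k}) sg,
    x < (n%:R ^+ 2)^-1 * mxdot (block_sign_mx pi sg) (A - Q).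
Proof.
move=> x0; have [/existsP[pi hpi] _|/existsPn hall] :=
  boolP [exists pi : {ffun 'I_n -> 'I_k}, x < norm1 (blockavg (A - Q) pi)].
  by have [sg hsg] := norm1_blockavg_sign pi (A - Q); exists pi, sg; rewrite -hsg.
rewrite ltNge => /negP []; apply: bigmax_le => // pi _.
by rewrite blockavgB leNgt; exact: hall.
Qed.

Lemma norm1_sub_le1 (A : 'M[R]_n) :
  (forall i j, 0 <= A i j <= 1) -> (forall i j, 0 <= Q i j <= 1) -> norm1 (A - Q) <= 1.
Proof.
move=> hA hQ; apply: (@le_trans _ _ ((n%:R ^+ 2)^-1 * n%:R ^+ 2)).
  rewrite ler_wpM2l ?invr_ge0 ?exprn_ge0 //.
  have -> : n%:R ^+ 2 = \sum_(a < n) \sum_(b < n) (1 : R).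
    by rewrite !sumr_const card_ord expr2 mulr_natr.
  apply: ler_sum => a _; apply: ler_sum => b _.
  move: (hA a b) (hQ a b) => /andP[? ?] /andP[? ?].
  by rewrite !mxE ler_norml; apply/andP; split; lra.
by have [->|nz] := eqVneq (n%:R ^+ 2 : R) 0; rewrite ?mulr0 ?mulVf.
Qed.

Lemma norm1_sub_le_mxdot (A : 'M[R]_n) :
  (forall i j, 0 <= A i j) -> (forall i j, 0 <= Q i j) ->
  norm1 (A - Q) <= (n%:R ^+ 2)^-1 * (mxdot (const_mx 1) (A - Q) + 2 * \sum_a \sum_b Q a b).
Proof.
move=> hA hQ; rewrite ler_wpM2l ?invr_ge0 ?exprn_ge0 // /mxdot mulr_sumr -big_split.
apply: ler_sum => a _; rewrite mulr_sumr -big_split; apply: ler_sum => b _.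
move: (hA a b) (hQ a b) => ? ?.
by rewrite /= !mxE mul1r ler_norml; apply/andP; split; lra.
Qed.

End CutNorm.

Lemma bern_mx_entry01 (R : realType) (n : nat) (w : {ffun 'I_n * 'I_n -> bool}) i j :
  0 <= bern_mx R w i j <= 1.
Proof. by rewrite mxE; do 2?case: ifP => _; rewrite ?lexx ?ler01 ?ler0n ?lern1 ?leq_b1. Qed.

Section BernoulliModel.
Variables (R : realType) (n : nat) (Q : 'M[R]_n).
Hypothesis hQ01 : forall i j, 0 <= Q i j <= 1.

Local Notation sample := {ffun 'I_n * 'I_n -> bool}.

Definition bern_factor (p : 'I_n * 'I_n) (b : bool) : R :=
  if (p.1 < p.2)%N then (if b then Q p.1 p.2 else 1 - Q p.1 p.2)
  else (if b then 0 else 1).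

Lemma bern_factor_ge0 p b : 0 <= bern_factor p b.
Proof.
have /andP[q0 q1] := hQ01 p.1 p.2.
by rewrite /bern_factor; case: ifP; case: b => //; rewrite subr_ge0.
Qed.

Lemma bern_factor_sum1 p : \sum_b bern_factor p b = 1.
Proof. by rewrite big_bool /bern_factor; case: ifP => _ /=; rewrite ?add0r // subrKC. Qed.

Lemma bern_weight_ge0 (w : sample) : 0 <= bern_weight Q w.
Proof. by apply: prodr_ge0 => p _; exact: bern_factor_ge0. Qed.

Lemma bern_sum_prod (f : 'I_n * 'I_n -> bool -> R) :
  \sum_(w : sample) bern_weight Q w * \prod_p f p (w p) =
  \prod_p \sum_b bern_factor p b * f p b.
Proof. by rewrite bigA_distr_bigA; apply: eq_bigr => w _; rewrite -big_split. Qed.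

Lemma bern_weight_sum1 : \sum_(w : sample) bern_weight Q w = 1.
Proof.
transitivity (\prod_p \sum_b bern_factor p b * (1 : R)).
  by rewrite -bern_sum_prod; apply: eq_bigr => w _; rewrite big1_eq mulr1.
by apply: big1 => p _; under eq_bigr do rewrite mulr1; exact: bern_factor_sum1.
Qed.

Lemma bern_sum_coord (p0 : 'I_n * 'I_n) (g : bool -> R) :
  \sum_(w : sample) bern_weight Q w * g (w p0) = \sum_b bern_factor p0 b * g b.
Proof.
have other p : p != p0 -> \sum_b bern_factor p b * (if p == p0 then g b else 1) = 1.
  by move=> /negPf hp; under eq_bigr do rewrite hp mulr1; exact: bern_factor_sum1.
have := bern_sum_prod (fun p b => if p == p0 then g b else 1).
rewrite [in X in _ = X](bigD1 p0) //= [X in _ * X]big1 // mulr1.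
under [in X in _ = X]eq_bigr do rewrite eqxx.
move=> <-; apply: eq_bigr => w _.
by rewrite (bigD1 p0) //= eqxx big1 ?mulr1 // => p /negPf->.
Qed.

Lemma bern_E_le (f g : 'M[R]_n -> R) :
  (forall w : sample, f (bern_mx R w) <= g (bern_mx R w)) -> bern_E Q f <= bern_E Q g.
Proof. by move=> hfg; apply: ler_sum => w _; rewrite ler_wpM2l ?bern_weight_ge0. Qed.

Lemma bern_E_affine (f : 'M[R]_n -> R) (a c : R) :
  bern_E Q (fun A => a * f A + c) = a * bern_E Q f + c.
Proof.
rewrite /bern_E mulr_sumr -[c in RHS]mul1r -bern_weight_sum1 mulr_suml -big_split /=.
by apply: eq_bigr => w _; ring.
Qed.

Lemma bern_E_indicator (P : pred 'M[R]_n) : bern_E Q (fun A => (P A)%:R) = bern_P Q P.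
Proof.
by rewrite /bern_P big_mkcond; apply: eq_bigr => w _; case: (P _); rewrite ?mulr1 ?mulr0.
Qed.

Lemma bern_P_le_E (P : pred 'M[R]_n) (G : 'M[R]_n -> R) :
  (forall w : sample, 0 <= G (bern_mx R w)) ->
  (forall w : sample, P (bern_mx R w) -> 1 <= G (bern_mx R w)) ->
  bern_P Q P <= bern_E Q G.
Proof.
move=> G0 G1; rewrite -bern_E_indicator; apply: bern_E_le => w.
by case: (P _) (G1 w) => [->|_] //; exact: G0.
Qed.

Lemma bern_P_union (I : finType) (P : pred 'M[R]_n) (E : I -> pred 'M[R]_n) :
  (forall w : sample, P (bern_mx R w) -> exists i, E i (bern_mx R w)) ->
  bern_P Q P <= \sum_i bern_P Q (E i).
Proof.
move=> hPE; have -> : \sum_i bern_P Q (E i) = bern_E Q (fun A => \sum_i (E i A)%:R).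
  rewrite /bern_E; under eq_bigr do rewrite -bern_E_indicator /bern_E.
  by rewrite exchange_big; apply: eq_bigr => w _; rewrite mulr_sumr.
apply: bern_P_le_E => [w|w /hPE [i hi]]; first by apply: sumr_ge0 => i _.
by rewrite (bigD1 i) //= hi lerDl; apply: sumr_ge0 => j _.
Qed.

Lemma bern_P_leNgt (f : 'M[R]_n -> R) (y : R) :
  bern_P Q (fun A => f A <= y) = 1 - bern_P Q (fun A => y < f A).
Proof.
have -> : bern_P Q (fun A => y < f A) =
    \sum_(w | ~~ (f (bern_mx R w) <= y)) bern_weight Q w.
  by apply: eq_bigl => w; rewrite ltNge.
by rewrite -bern_weight_sum1 (bigID (fun w => f (bern_mx R w) <= y)) /= addrK.
Qed.

Lemma bern_E_le_tail (f : 'M[R]_n -> R) (y : R) : 0 <= y ->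
  (forall w : sample, f (bern_mx R w) <= 1) ->
  bern_E Q f <= y + bern_P Q (fun A => y < f A).
Proof.
move=> y0 f1; rewrite -bern_E_indicator addrC -[bern_E _ _ in X in _ <= X]mul1r.
rewrite -bern_E_affine; apply: bern_E_le => w.
case: ltP => hy; last by rewrite mulr0 add0r.
by rewrite mulr1 (le_trans (f1 w)) // lerDl.
Qed.

Hypothesis hsym : Q^T = Q.
Hypothesis hdiag : forall i, Q i i = 0.

Lemma Q_sym i j : Q j i = Q i j.
Proof. by rewrite -[in LHS]hsym mxE. Qed.

Definition pair_term (c : 'M[R]_n) (p : 'I_n * 'I_n) (b : bool) : R :=
  if (p.1 < p.2)%N then (c p.1 p.2 + c p.2 p.1) * (b%:R - Q p.1 p.2) else 0.

Lemma mxdot_bern_pairs (c : 'M[R]_n) (w : sample) :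
  mxdot c (bern_mx R w - Q) = \sum_p pair_term c p (w p).
Proof.
rewrite /mxdot sum_offdiag => [|a]; last by rewrite !mxE ltnn hdiag subrr mulr0.
rewrite [RHS](bigID (fun p : 'I_n * 'I_n => (p.1 < p.2)%N)) /= [X in _ = _ + X]big1; last first.
  by move=> p /negPf hp; rewrite /pair_term hp.
rewrite addr0; apply: eq_bigr => -[a b] /= hab.
rewrite /pair_term /= hab !mxE hab ltnNge (ltnW hab) /= Q_sym; ring.
Qed.

Lemma sum_Q_pairs :
  \sum_a \sum_b Q a b = \sum_(p : 'I_n * 'I_n | (p.1 < p.2)%N) 2 * Q p.1 p.2.
Proof.
rewrite (sum_offdiag (F := fun a b => Q a b) hdiag); apply: eq_bigr => p _.
by rewrite (Q_sym p.1 p.2) -mulr2n mulr_natl.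
Qed.

Lemma bern_E_mxdot (c : 'M[R]_n) : bern_E Q (fun A => mxdot c (A - Q)) = 0.
Proof.
rewrite /bern_E; under eq_bigr do rewrite mxdot_bern_pairs mulr_sumr.
rewrite exchange_big big1 // => p _.
rewrite bern_sum_coord big_bool /bern_factor /pair_term.
by case: ifP => _ /=; rewrite ?mulr0 // ?mulr1n; ring.
Qed.

Lemma pair_term_mgf_le (c : 'M[R]_n) (lam : R) p :
  (forall a b, `|c a b| <= 1) -> 0 <= lam <= 1/4 ->
  \sum_b bern_factor p b * expR (lam * pair_term c p b) <=
  expR (if (p.1 < p.2)%N then 8 * lam ^+ 2 * Q p.1 p.2 else 0).
Proof.
move=> c1 /andP[lam0 lam1]; rewrite big_bool /bern_factor /pair_term.
case: ifP => _ /=; last by rewrite !mulr0 expR0 mul0r add0r mul1r.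
set t := c p.1 p.2 + c p.2 p.1; set q := Q p.1 p.2.
have t2 : `|t| <= 2.
  by apply: le_trans (ler_normD _ _) _; have := c1 p.1 p.2; have := c1 p.2 p.1; lra.
have hmu : lam * t <= 1/2.
  apply: le_trans (ler_norm _) _; rewrite normrM ger0_norm //.
  have : lam * `|t| <= 1/4 * 2 by apply: ler_pM.
  lra.
have hq : 0 <= q <= 1 := hQ01 p.1 p.2.
have := bernoulli_mgf_le hq hmu; rewrite mulr1n sub0r !mulrA mulrN => /le_trans; apply.
rewrite ler_expR; have /andP[q0 _] := hq.
have : (lam * t) ^+ 2 <= 4 * lam ^+ 2.
  rewrite exprMn mulrC ler_wpM2r ?sqr_ge0 // -real_normK ?num_real //.
  by have := normr_ge0 t; nra.
nra.
Qed.

Lemma bern_mgf_mxdot (c : 'M[R]_n) (lam : R) :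
  (forall a b, `|c a b| <= 1) -> 0 <= lam <= 1/4 ->
  bern_E Q (fun A => expR (lam * mxdot c (A - Q))) <=
  expR (4 * lam ^+ 2 * \sum_a \sum_b Q a b).
Proof.
move=> c1 hlam.
have -> : bern_E Q (fun A => expR (lam * mxdot c (A - Q))) =
    \prod_p \sum_b bern_factor p b * expR (lam * pair_term c p b).
  rewrite -bern_sum_prod; apply: eq_bigr => w _.
  by rewrite mxdot_bern_pairs mulr_sumr expR_sum.
rewrite sum_Q_pairs mulr_sumr [in X in _ <= X]big_mkcond expR_sum; apply: ler_prod => p _.
rewrite sumr_ge0 => [|b _]; last by rewrite mulr_ge0 ?bern_factor_ge0 ?expR_ge0.
apply: le_trans (pair_term_mgf_le p c1 hlam) _.
case: ifP => _ //.
by have -> : 4 * lam ^+ 2 * (2 * Q p.1 p.2) = 8 * lam ^+ 2 * Q p.1 p.2 by ring.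
Qed.

Lemma bern_P_mxdot_gt (c : 'M[R]_n) (lam t : R) (P : pred 'M[R]_n) :
  (forall a b, `|c a b| <= 1) -> 0 <= lam <= 1/4 ->
  (forall w : sample, P (bern_mx R w) -> t < mxdot c (bern_mx R w - Q)) ->
  bern_P Q P <= expR (- (lam * t) + 4 * lam ^+ 2 * \sum_a \sum_b Q a b).
Proof.
move=> c1 hlam hP; have /andP[lam0 _] := hlam.
pose G A := expR (- (lam * t)) * expR (lam * mxdot c (A - Q)) + 0.
apply: (@le_trans _ _ (bern_E Q G)).
  apply: bern_P_le_E => [w|w /hP ht]; first by rewrite /G addr0 mulr_ge0 ?expR_ge0.
  rewrite /G addr0 -expRD; apply: le_trans (expR_ge1Dx _); rewrite lerDl.
  by rewrite -mulrN -mulrDr mulr_ge0 // addrC subr_ge0 ltW.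
rewrite bern_E_affine addr0 expRD ler_wpM2l ?expR_ge0 //; exact: bern_mgf_mxdot.
Qed.

End BernoulliModel.

Section CutNormConcentration.
Variables (R : realType) (n k : nat) (Q : 'M[R]_n).
Hypothesis hsym : Q^T = Q.
Hypothesis hQ01 : forall i j, 0 <= Q i j <= 1.
Hypothesis hdiag : forall i, Q i i = 0.
Hypothesis hn : (0 < n)%N.

Local Notation N := (n%:R : R).

Lemma N_gt0 : 0 < N. Proof. by rewrite ltr0n. Qed.

Lemma sum_eq_rho : \sum_a \sum_b Q a b = N ^+ 2 * rho Q.
Proof. by rewrite /rho mulrA mulfV ?mul1r // gt_eqF // exprn_gt0 // N_gt0. Qed.

Lemma rho_ge0 : 0 <= rho Q.
Proof.
rewrite /rho mulr_ge0 ?invr_ge0 ?exprn_ge0 //.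
by apply: sumr_ge0 => a _; apply: sumr_ge0 => b _; case/andP: (hQ01 a b).
Qed.

Lemma cut_eps_mean_le : bern_E Q (cut_eps k Q) <= 2 * rho Q.
Proof.
have Q0 i j : 0 <= Q i j by have /andP[] := hQ01 i j.
pose g A := (N ^+ 2)^-1 * mxdot (const_mx 1) (A - Q) + (N ^+ 2)^-1 * (2 * \sum_a \sum_b Q a b).
apply: (@le_trans _ _ (bern_E Q g)).
  apply: (bern_E_le hQ01) => w; rewrite /g /= -mulrDr.
  apply: le_trans (cut_eps_le_norm1 _ _ _) (norm1_sub_le_mxdot _ Q0) => i j.
  by have /andP[] := bern_mx_entry01 R w i j.
by rewrite /g bern_E_affine (bern_E_mxdot hsym hdiag) mulr0 add0r /rho mulrCA.
Qed.

Lemma cut_eps_bern_le1 (w : {ffun 'I_n * 'I_n -> bool}) : cut_eps k Q (bern_mx R w) <= 1.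
Proof.
apply: le_trans (cut_eps_le_norm1 _ _ _) (norm1_sub_le1 _ hQ01).
exact: bern_mx_entry01.
Qed.

Lemma cut_eps_tail_global (x : R) :
  bern_P Q (fun A => x < cut_eps k Q A) <= expR (- (N ^+ 2 * (x - 3 * rho Q)) / 4).
Proof.
have Q0 i j : 0 <= Q i j by have /andP[] := hQ01 i j.
have c1 (a b : 'I_n) : `|(const_mx 1 : 'M[R]_n) a b| <= 1 by rewrite mxE normr1.
have hlam : 0 <= (1 / 4 : R) <= 1 / 4 by apply/andP; split; lra.
apply: le_trans (bern_P_mxdot_gt hQ01 hsym hdiag (t := N ^+ 2 * (x - 2 * rho Q)) c1 hlam _) _.
  move=> w /lt_le_trans /(_ (cut_eps_le_norm1 _ _ _)) /lt_le_trans.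
  move=> /(_ _ (norm1_sub_le_mxdot _ Q0)) hx.
  have {hx} : N ^+ 2 * x < mxdot (const_mx 1) (bern_mx R w - Q) + 2 * (N ^+ 2 * rho Q).
    rewrite -sum_eq_rho -ltr_pdivlMl ?exprn_gt0 ?N_gt0 //; apply: hx => i j.
    by have /andP[] := bern_mx_entry01 R w i j.
  lra.
by rewrite sum_eq_rho ler_expR; lra.
Qed.

Lemma cut_eps_tail_union (x lam : R) : 0 <= x -> 0 <= lam <= 1/4 ->
  bern_P Q (fun A => x < cut_eps k Q A) <=
  (k ^ n * 2 ^ (k * k))%:R * expR (- (lam * (N ^+ 2 * x)) + 4 * lam ^+ 2 * (N ^+ 2 * rho Q)).
Proof.
move=> x0 hlam.
pose E (i : {ffun 'I_n -> 'I_k} * {ffun 'I_k * 'I_k -> bool}) (A : 'M[R]_n) :=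
  N ^+ 2 * x < mxdot (block_sign_mx i.1 i.2) (A - Q).
apply: le_trans (bern_P_union hQ01 (E := E) _) _.
  move=> w /(cut_eps_gt x0) [pi [sg hx]]; exists (pi, sg).
  by rewrite /E /= -ltr_pdivlMl ?exprn_gt0 ?N_gt0.
rewrite -sum_eq_rho.
apply: le_trans (ler_sum _ (fun i _ => bern_P_mxdot_gt hQ01 hsym hdiag
  (block_sign_mx_bound R i.1 i.2) hlam (fun w (h : E i (bern_mx R w)) => h))) _.
rewrite sumr_const card_prod !card_ffun !card_prod card_bool !card_ord.
by rewrite [X in _ <= X]mulr_natl.
Qed.

Lemma cut_eps_tail_sparse (y : R) : 1 <= N * y -> 3 * rho Q <= 4 * y ->
  bern_P Q (fun A => 8 * y < cut_eps k Q A) <= expR (- N).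
Proof.
move=> hNy hry; apply: le_trans (cut_eps_tail_global _) _; rewrite ler_expR.
have hN : N * 1 <= N * (N * y) by rewrite ler_wpM2l // ltW // N_gt0.
rewrite mulr1 mulrA -expr2 in hN.
have : N ^+ 2 * (4 * y) <= N ^+ 2 * (8 * y - 3 * rho Q) by rewrite ler_wpM2l ?exprn_ge0 //; lra.
lra.
Qed.

Hypothesis hk : (1 <= k)%N.

Lemma cut_eps_tail_dense : 4 * Num.sqrt (rho Q * cut_rate R n k) < 3 * rho Q ->
  bern_P Q (fun A => 8 * Num.sqrt (rho Q * cut_rate R n k) < cut_eps k Q A) <= expR (- N).
Proof.
set r := rho Q; set B := cut_rate R n k; set y := Num.sqrt _ => hry.
have y0 : 0 <= y := sqrtr_ge0 _.
have r0 : 0 < r by lra.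
have r3 : 0 < 3 * r by lra.
have B0 : 0 <= B := cut_rate_ge0 R n hk.
have yy : y ^+ 2 = r * B by rewrite sqr_sqrtr // mulr_ge0 // ltW.
(* With this lam the Chernoff exponent is -(20/9) n^2 rate, enough to absorb the
   k^n 2^(k^2) sign patterns. *)
set lam := y / (3 * r).
have hlam : 0 <= lam <= 1/4.
  apply/andP; split; first by rewrite /lam divr_ge0 // ltW.
  by rewrite /lam ler_pdivrMr; lra.
apply: le_trans (cut_eps_tail_union (x := 8 * y) _ hlam) _; first by rewrite mulr_ge0.
apply: le_trans (ler_wpM2r (expR_ge0 _) (count_le_expR R n hk)) _.
have e1 : lam * (N ^+ 2 * (8 * y)) = 8 / 3 * (N ^+ 2 * B).
  by rewrite /lam -[B](mulKf (lt0r_neq0 r0)) -yy; field; rewrite gt_eqF.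
have e2 : 4 * lam ^+ 2 * (N ^+ 2 * r) = 4 / 9 * (N ^+ 2 * B).
  by rewrite /lam -[B](mulKf (lt0r_neq0 r0)) -yy; field; rewrite gt_eqF.
rewrite -expRD ler_expR e1 e2 cut_rate_scaled //.
have := ln_k_ge0 R hk; have := N_gt0; nra.
Qed.

Lemma sqrt_bound_ge_inv : 1 <= N * rho Q -> 1 <= N * Num.sqrt (rho Q * cut_rate R n k).
Proof.
move=> hr; have r0 := rho_ge0.
have hB : 1 <= N * cut_rate R n k.
  by rewrite -ler_pdivrMl ?N_gt0 // mulr1; exact: cut_rate_ge_inv.
have B0 := cut_rate_ge0 R n hk.
set y := Num.sqrt _; have y0 : 0 <= y := sqrtr_ge0 _.
have : 1 <= (N * y) ^+ 2.
  rewrite exprMn sqr_sqrtr; last exact: mulr_ge0 r0 B0.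
  have -> : N ^+ 2 * (rho Q * cut_rate R n k) = (N * rho Q) * (N * cut_rate R n k) by ring.
  by rewrite mulr_ege1.
have z0 : 0 <= N * y by rewrite mulr_ge0 // ltW // N_gt0.
rewrite expr2; nra.
Qed.

Lemma expRN_le_sqrt_bound : 1 <= N * rho Q -> expR (- N) <= Num.sqrt (rho Q * cut_rate R n k).
Proof.
move=> /sqrt_bound_ge_inv hy; apply: (@le_trans _ _ N^-1).
  rewrite expRN lef_pV2 ?posrE ?expR_gt0 ?N_gt0 //.
  by apply: le_trans (expR_ge1Dx _); rewrite lerDr.
by rewrite -ler_pdivrMl ?N_gt0 // mulr1 in hy.
Qed.

Lemma rho_le_sqrt_bound : N * rho Q < 1 -> rho Q <= Num.sqrt (rho Q * cut_rate R n k).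
Proof.
move=> hr; have r0 := rho_ge0.
have hrB : rho Q <= cut_rate R n k.
  apply: le_trans (cut_rate_ge_inv R n hk); rewrite -[N^-1]mulr1 ler_pdivlMl ?N_gt0 //; exact: ltW.
have rB0 : 0 <= rho Q * cut_rate R n k by exact: mulr_ge0 r0 (le_trans r0 hrB).
by rewrite -[X in X <= _](ger0_norm r0) -sqrtr_sqr ler_sqrt // expr2 ler_wpM2l.
Qed.

Lemma cut_eps_tail : 1 <= N * rho Q ->
  bern_P Q (fun A => 8 * Num.sqrt (rho Q * cut_rate R n k) < cut_eps k Q A) <= expR (- N).
Proof.
move=> hr; have [hry|hry] := lerP (3 * rho Q) (4 * Num.sqrt (rho Q * cut_rate R n k)).
  exact: cut_eps_tail_sparse (sqrt_bound_ge_inv hr) hry.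
exact: cut_eps_tail_dense.
Qed.

End CutNormConcentration.

Theorem lemmaB2 (R : realType) (n k : nat) (hk1 : (1 <= k)%N) (hkn : (k <= n)%N)
  (Q : 'M[R]_n)
  (hsym : Q^T = Q)
  (hQ01 : forall i j, 0 <= Q i j <= 1)
  (hdiag : forall i, Q i i = 0) :
  let bound := rho Q * ((1 + ln (k%:R : R)) / n%:R + (k%:R ^+ 2) / (n%:R ^+ 2)) in
  bern_E Q (fun A => cut_eps k Q A) <= 9 * Num.sqrt bound /\
  (1 <= n%:R * rho Q ->
     1 - expR (- n%:R) <= bern_P Q (fun A => cut_eps k Q A <= 8 * Num.sqrt bound)).
Proof.
move=> bound; have hn : (0 < n)%N := leq_trans hk1 hkn.
have s0 : 0 <= Num.sqrt bound := sqrtr_ge0 _.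
have [hr|hr] := lerP 1 (n%:R * rho Q); last first.
  split=> //.
  apply: le_trans (cut_eps_mean_le k hsym hQ01 hdiag) _.
  by have := rho_le_sqrt_bound hQ01 hn hk1 hr; rewrite -/bound; lra.
have tail := cut_eps_tail hsym hQ01 hdiag hn hk1 hr; rewrite -/bound in tail.
split=> [|_]; last by rewrite bern_P_leNgt lerD2l lerN2.
apply: le_trans (bern_E_le_tail hQ01 (y := 8 * Num.sqrt bound) _ (cut_eps_bern_le1 k hQ01)) _.
  by rewrite mulr_ge0.
by have := expRN_le_sqrt_bound hQ01 hn hk1 hr; rewrite -/bound; lra.
Qed.
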